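(* Let $G=(X,E)$ be a graph with $|X|\ge4$. Then $G$ is a polar-cat if and only if there exist a vertex $v\in X$ and two ordered sets $Y=\{y_1,\dots,y_{k-1},y_k=v\}$ and $Z=\{z_1,\dots,z_{m-1},z_m=v\}$ with $k,m\ge2$, $Y\cap Z=\{v\}$ and $Y\cup Z=X$, such that one of the following holds: (a) $G[Y]$ and $G[Z]$ are connected and the edge set of $G$ consists exactly of the pairs $\{y_i,y_j\}$ with $1\le i<j\le k$, $i$ odd, and the pairs $\{z_i,z_j\}$ with $1\le i<j\le m$, $i$ odd; (b) $G[Y]$ and $G[Z]$ are disconnected and the edge set of $G$ consists exactly of the pairs $\{y_i,y_j\}$ with $1\le i<j\le k$, $i$ even, the pairs $\{z_i,z_j\}$ with $1\le i<j\le m$, $i$ even, and all pairs $\{y,z\}$ with $y\in Y\setminus\{v\}$, $z\in Z\setminus\{v\}$. In this case $G$ is a $(v,G[Y],G[Z])$-polar-cat.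
   Context: Graphs finite, simple, undirected; $G[W]$ induced subgraph; $G-v$ deletion; join of vertex-disjoint graphs adds all edges between them to the disjoint union; a cograph is a graph without induced $P_4$. A caterpillar is a rooted tree whose inner vertices each have two children and induce a path with the root at one end; a cherry is a pair of leaves with a common parent. A cograph is caterpillar-explainable if its unique discriminating cotree (the labeled rooted tree explaining it in which adjacent inner vertices get different labels from $\{0,1\}$; $x,y$ adjacent iff their lowest common ancestor has label 1) is a caterpillar. $G$ is a $(v,G_1,G_2)$-pseudo-cograph if $G_1,G_2$ are induced subgraphs, $v\in V(G)$, with $V(G)=V(G_1)\cup V(G_2)$, $V(G_1)\cap V(G_2)=\{v\}$, $|V(G_1)|,|V(G_2)|>1$, $G_1,G_2$ cographs, and $G-v$ the join or disjoint union of $G_1-v,G_2-v$. Such $G$ with $|V(G)|\ge4$ is a $(v,G_1,G_2)$-polar-cat if either ($G_1,G_2$ both connected and $G-v$ the disjoint union of $G_1-v,G_2-v$) or ($G_1,G_2$ both disconnected and $G-v$ the join), and $G_1,G_2$ are caterpillar-explainable with $v$ part of a cherry in both explaining caterpillars. A polar-cat is a $(v,G_1,G_2)$-polar-cat for some $v,G_1,G_2$. *)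

(* A graph is G = (T, e) with vertex set all of the finType T
   and edge relation e (symmetric, irreflexive).  Induced subgraphs G[W] are
   represented by their vertex sets W : {set T}. *)
From mathcomp Require Import all_boot.
Set Implicit Arguments. Unset Strict Implicit. Unset Printing Implicit Defensive.

Section Graphs.
Variables (T : finType) (e : rel T).

Definition cograph (W : {set T}) : Prop :=
  forall a b c d, a \in W -> b \in W -> c \in W -> d \in W ->
    e a b -> e b c -> e c d -> ~~ e a c -> ~~ e b d -> ~~ e a d -> False.

Definition connected (W : {set T}) : Prop :=
  W != set0 /\
  forall x y, x \in W -> y \in W ->
    connect (fun a b => [&& a \in W, b \in W & e a b]) x y.

(* Rooted labelled trees with leaves in T; inner vertices carry a label in {0,1}
   (false = 0, true = 1). *)
Inductive cotree : Type := CLeaf of T | CNode of bool & seq cotree.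

Fixpoint leaves (t : cotree) : seq T :=
  match t with CLeaf x => [:: x] | CNode _ ts => flatten (map leaves ts) end.

Definition is_leaf (t : cotree) : bool := if t is CLeaf _ then true else false.
Definition is_leaf_of (v : T) (t : cotree) : bool :=
  if t is CLeaf x then x == v else false.
Definition label_differs (b : bool) (t : cotree) : bool :=
  if t is CNode b' _ then b' != b else true.

Fixpoint discriminating (t : cotree) : bool :=
  match t with
  | CLeaf _ => true
  | CNode b ts => [&& 1 < size ts, all (label_differs b) ts & all discriminating ts]
  end.

Fixpoint lca_label (x y : T) (t : cotree) : bool :=
  match t with
  | CLeaf _ => false
  | CNode b ts =>
      if has (fun c => (x \in leaves c) && (y \in leaves c)) ts
      then has (fun c => [&& x \in leaves c, y \in leaves c & lca_label x y c]) ts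
      else b
  end.

Definition explains (W : {set T}) (t : cotree) : Prop :=
  [/\ uniq (leaves t), (forall x, (x \in leaves t) = (x \in W)) &
      forall x y, x \in W -> y \in W -> x != y -> e x y = lca_label x y t].

Definition discr_cotree_of (W : {set T}) (t : cotree) : Prop :=
  discriminating t /\ explains W t.

(* Caterpillar: every inner vertex has exactly two children, and the inner
   vertices induce a path with the root at one end (each inner vertex has at
   most one inner child). *)
Fixpoint caterpillar (t : cotree) : bool :=
  match t with
  | CLeaf _ => true
  | CNode _ ts => [&& size ts == 2, count (fun c => ~~ is_leaf c) ts <= 1 &
                     all caterpillar ts]
  end.

Fixpoint in_cherry (v : T) (t : cotree) : bool :=
  match t with
  | CLeaf _ => false
  | CNode _ ts => ((1 < count is_leaf ts) && has (is_leaf_of v) ts)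
                  || has (in_cherry v) ts
  end.

Definition caterpillar_explainable (W : {set T}) : Prop :=
  exists t, discr_cotree_of W t /\ caterpillar t.

(* (v, G[V1], G[V2])-pseudo-cograph, with join = true meaning G - v is the join
   and join = false meaning it is the disjoint union of G[V1]-v and G[V2]-v. *)
Definition pseudo_cograph_with (join : bool) (v : T) (V1 V2 : {set T}) : Prop :=
  [/\ V1 :|: V2 = [set: T], V1 :&: V2 = [set v], 1 < #|V1| /\ 1 < #|V2|,
      cograph V1 /\ cograph V2 &
      forall x y, x \in V1 :\ v -> y \in V2 :\ v -> e x y = join].

Definition pseudo_cograph (v : T) (V1 V2 : {set T}) : Prop :=
  pseudo_cograph_with true v V1 V2 \/ pseudo_cograph_with false v V1 V2.

Definition polar_cat_at (v : T) (V1 V2 : {set T}) : Prop :=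
  [/\ 4 <= #|T| /\ pseudo_cograph v V1 V2,
      (connected V1 /\ connected V2 /\ pseudo_cograph_with false v V1 V2)
      \/ (~ connected V1 /\ ~ connected V2 /\ pseudo_cograph_with true v V1 V2),
      caterpillar_explainable V1, caterpillar_explainable V2 &
      (exists t1, [/\ discr_cotree_of V1 t1, caterpillar t1 & in_cherry v t1]) /\
      (exists t2, [/\ discr_cotree_of V2 t2, caterpillar t2 & in_cherry v t2])].

Definition polar_cat : Prop := exists v V1 V2, polar_cat_at v V1 V2.

(* {x,y} = {s_i, s_j} for some 1 <= i < j <= size s (1-indexed) with
   odd i = par. *)
Definition seq_edge (par : bool) (s : seq T) (x y : T) : Prop :=
  exists i j, [/\ i < j < size s, odd i.+1 = par &
     (x = nth x s i /\ y = nth x s j) \/ (y = nth x s i /\ x = nth x s j)].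

Definition polar_cat_shape (v : T) (ys zs : seq T) : Prop :=
  [/\ uniq ys /\ uniq zs, 2 <= size ys /\ 2 <= size zs,
      last v ys = v /\ last v zs = v,
      ([set x in ys] :&: [set x in zs] = [set v]) /\
      ([set x in ys] :|: [set x in zs] = [set: T]) &
      (connected [set x in ys] /\ connected [set x in zs] /\
       forall x y, e x y <-> seq_edge true ys x y \/ seq_edge true zs x y)
   \/ (~ connected [set x in ys] /\ ~ connected [set x in zs] /\
       forall x y, e x y <->
         [\/ seq_edge false ys x y, seq_edge false zs x y,
             (x \in [set z in ys] :\ v /\ y \in [set z in zs] :\ v) |
             (y \in [set z in ys] :\ v /\ x \in [set z in zs] :\ v)])].

End Graphs.

From mathcomp Require Import all_boot.
From mathcomp Require Import zify.
Set Implicit Arguments. Unset Strict Implicit. Unset Printing Implicit Defensive.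

(* In a discriminating caterpillar whose cherry contains v, list the
   leaves in the order s_1, ..., s_k = v in which they hang off the spine, from
   the root down.  The lca of s_i and s_j (i < j) is the spine node holding s_i,
   and the labels alternate along the spine, so s_i ~ s_j depends only on the
   parity of i and on the root label.  Conversely every such order gives a
   caterpillar.  A polar-cat is therefore two such orders glued at v, with the
   parts G1 - v, G2 - v joined iff the root labels are 0.  Connectivity of G1
   pins down its root label, since s_1 is universal (label 1) or isolated
   (label 0) in G1; this yields exactly the shapes (a) and (b). *)

Lemma rel_reflectE (T : Type) (e p : rel T) (P : T -> T -> Prop) :
  (forall x y, reflect (P x y) (p x y)) -> (forall x y, e x y <-> P x y) <-> e =2 p.
Proof.
move=> Pp; split=> He x y; last by rewrite He; split=> /Pp.
by apply/idP/idP => [/He/Pp | /Pp/He].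
Qed.

Section SeqAdjacency.
Variable T : finType.
Implicit Types (s : seq T) (x y u w : T) (b : bool).

Definition seq_lab b s x y := odd (minn (index x s) (index y s)).+1 == b.

Definition seq_adj b s x y := [&& x \in s, y \in s, x != y & seq_lab b s x y].

Lemma seq_labC b s x y : seq_lab b s x y = seq_lab b s y x.
Proof. by rewrite /seq_lab minnC. Qed.

Lemma seq_adjC b s x y : seq_adj b s x y = seq_adj b s y x.
Proof. by rewrite /seq_adj seq_labC eq_sym; case: (x \in s); case: (y \in s). Qed.

Lemma seq_lab_head b a s y : seq_lab b (a :: s) a y = b.
Proof. by rewrite /seq_lab /= eqxx min0n /=; case: b. Qed.

Lemma seq_lab_cons b a s x y :
  x != a -> y != a -> seq_lab b (a :: s) x y = seq_lab (~~ b) s x y.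
Proof.
move=> xa ya; rewrite /seq_lab /= (eq_sym a x) (eq_sym a y) (negbTE xa) (negbTE ya).
by rewrite minnSS /=; case: (odd _); case: b.
Qed.

Lemma seq_lab_le b s x y :
  index x s <= index y s -> seq_lab b s x y = (odd (index x s).+1 == b).
Proof. by move=> h; rewrite /seq_lab (minn_idPl h). Qed.

Lemma seq_edgeP b s x y : uniq s -> seq_edge b s x y <-> seq_adj b s x y.
Proof.
move=> us; split.
  case=> i [j [/andP [ij js] hb Hxy]].
  have is_ : i < size s by apply: ltn_trans js.
  have adj_ij : seq_adj b s (nth x s i) (nth x s j).
    rewrite /seq_adj /seq_lab !mem_nth //= nth_uniq // !index_uniq //.
    by rewrite (minn_idPl (ltnW ij)) -hb /= eqxx andbT neq_ltn ij.
  by case: Hxy => [[hx hy]|[hy hx]]; rewrite hx hy // seq_adjC.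
case/and4P=> xs ys xy hl.
have ne : index x s != index y s.
  by apply: contra xy => /eqP h; rewrite -(nth_index x xs) h nth_index.
move: hl; rewrite /seq_lab; case: ltngtP ne => // h _ /eqP hb.
  exists (index x s), (index y s); split => //; first by rewrite h index_mem.
  by left; rewrite !nth_index.
exists (index y s), (index x s); split => //; first by rewrite h index_mem.
by right; rewrite !nth_index.
Qed.

Lemma seq_adj_first b s x u w : x \in s -> u \in s -> w \in s -> x != u -> x != w ->
  index x s <= index u s -> index x s <= index w s -> seq_adj b s x u = seq_adj b s x w.
Proof. by move=> xs us ws xu xw hu hw; rewrite /seq_adj xs us ws xu xw !seq_lab_le. Qed.

Variable e : rel T.
Hypothesis e_sym : symmetric e.

(* Each vertex of an induced P4 has a neighbour and a non-neighbour among the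
   other three, which [seq_adj_first] forbids for the one of least index. *)
Lemma cograph_seq_adj b s :
  {in s &, e =2 seq_adj b s} -> cograph e [set x in s].
Proof.
move=> He a1 b1 c1 d1; rewrite !inE => ha hb hc hd eab ebc ecd nac nbd nad.
have ac : a1 != c1 by apply: contraNneq nad => ->.
have bd : b1 != d1 by apply: contraNneq nad => <-.
have ad : a1 != d1 by apply: contraNneq nac => ->; rewrite e_sym.
have hub x u w : x \in s -> u \in s -> w \in s -> x != w ->
    index x s <= index u s -> index x s <= index w s -> e x u -> ~~ e x w -> False.
  move=> xs us ws xw hu hw; have [<-|xu] := eqVneq x u.
    by rewrite He // /seq_adj eqxx !andbF.
  by rewrite !He // (seq_adj_first b xs us ws xu xw hu hw) => ->.
have [[i1 [i2 i3]]|[[i1 [i2 i3]]|[[i1 [i2 i3]]|[i1 [i2 i3]]]]] :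
    let p := index a1 s in let q := index b1 s in let r := index c1 s in let t := index d1 s in
    (p <= q /\ p <= r /\ p <= t) \/ (q <= p /\ q <= r /\ q <= t) \/
    (r <= p /\ r <= q /\ r <= t) \/ (t <= p /\ t <= q /\ t <= r).
  by move: (index a1 s) (index b1 s) (index c1 s) (index d1 s); clear=> /= p q r t; lia.
- exact: (hub a1 b1 c1 ha hb hc ac i1 i2 eab nac).
- by apply: (hub b1 a1 d1 hb ha hd bd i1 i3 _ nbd); rewrite e_sym.
- by apply: (hub c1 b1 a1 hc hb ha _ i2 i1); rewrite 1?eq_sym 1?e_sym.
- by apply: (hub d1 c1 a1 hd hc ha _ i3 i1); rewrite 1?eq_sym 1?e_sym.
Qed.

(* The first vertex is isolated if [b = false] and universal if [b = true]. *)
Lemma connected_seq_adj b s : uniq s -> 1 < size s ->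
  {in s &, e =2 seq_adj b s} -> connected e [set x in s] <-> b.
Proof.
case: s => [//|a [//|c r]] us _ He.
have adj_head y : y \in a :: c :: r -> y != a -> e a y = b.
  by move=> ys ya; rewrite He ?mem_head // /seq_adj mem_head ys eq_sym ya seq_lab_head.
split=> [[_ Hconn]|hb].
  apply: contraTT isT => nb.
  have ha : a \in [set x in a :: c :: r] by rewrite inE mem_head.
  have hc : c \in [set x in a :: c :: r] by rewrite !inE eqxx orbT.
  case/connectP: (Hconn a c ha hc) => -[|z p] /=.
    by move=> _ ca; move: us; rewrite /= -ca mem_head.
  case/andP=> /and3P [_ zs ez] _ _.
  rewrite inE in zs; move: ez; have [->|za] := eqVneq z a.
    by rewrite He ?mem_head // /seq_adj eqxx !andbF.
  by rewrite adj_head // (negbTE nb).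
split; first by apply/set0Pn; exists a; rewrite inE mem_head.
have edge_a y : y \in a :: c :: r ->
    connect (fun u w => [&& u \in [set x in a :: c :: r],
                            w \in [set x in a :: c :: r] & e u w]) a y.
  move=> ys; have [->|ya] := eqVneq y a; first exact: connect0.
  by apply: connect1; rewrite !in_set mem_head ys adj_head.
move=> x y; rewrite !in_set => xs ys; apply: connect_trans (edge_a _ ys).
rewrite sym_connect_sym; first exact: edge_a.
by move=> u w; rewrite e_sym andbCA.
Qed.

End SeqAdjacency.

Section CaterpillarCotree.
Variable T : finType.
Implicit Types (s : seq T) (x y v : T) (b : bool) (t c : cotree T).

(* The caterpillar whose leaf children, read from the root down, are the
   entries of [s]; the last two entries form the cherry.  [s = [::]] is junk. *)
Fixpoint cat_cotree b s : cotree T :=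
  match s with
  | [::] => CNode b [::]
  | x :: s' => if s' is [::] then CLeaf x else CNode b [:: CLeaf x; cat_cotree (~~ b) s']
  end.

Lemma leaves_cat_cotree b x s : leaves (cat_cotree b (x :: s)) = x :: s.
Proof. by elim: s x b => [|y s IH] x b //=; rewrite cats0 IH. Qed.

Lemma discriminating_cat_cotree b x s : discriminating (cat_cotree b (x :: s)).
Proof.
elim: s x b => [|y s IH] x b //=; rewrite IH andbT.
by case: s {IH} => [|z s] //=; case: b.
Qed.

Lemma caterpillar_cat_cotree b x s : caterpillar (cat_cotree b (x :: s)).
Proof. by elim: s x b => [|y s IH] x b //=; rewrite IH; case: s {IH}. Qed.

Lemma in_cherry_cat_cotree b x y s : in_cherry (last y s) (cat_cotree b [:: x, y & s]).
Proof.
elim: s b x y => [|z s IH] b x y /=; first by rewrite eqxx orbT.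
by have /= -> := IH (~~ b) y z.
Qed.

Definition cat_order t b v s :=
  [/\ uniq s, leaves t =i s, s != [::], last v s = v &
      {in s &, forall x y, x != y -> lca_label x y t = seq_lab b s x y}].

Lemma cat_order_leaf b v : cat_order (CLeaf v) b v [:: v].
Proof. by split=> // x y; rewrite !inE => /eqP -> /eqP ->; rewrite eqxx. Qed.

Lemma cat_order_cons b x c v s :
  x \notin s -> cat_order c (~~ b) v s -> cat_order (CNode b [:: CLeaf x; c]) b v (x :: s).
Proof.
move=> xs [us Lc s0 ls Hc]; split=> //=; first by rewrite xs.
- by move=> z; rewrite cats0 !inE Lc.
- by case: s s0 ls {us Lc Hc xs}.
move=> y z ys zs yz; rewrite /= !Lc !mem_seq1.
have [yx|yx] := eqVneq y x.
  by rewrite yx (negbTE xs) /= andbF orbF (eq_sym z x) -yx (negbTE yz) seq_lab_head.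
have [zx|zx] := eqVneq z x.
  by rewrite zx (negbTE xs) /= !andbF seq_labC seq_lab_head.
move: ys zs; rewrite !inE (negbTE yx) (negbTE zx) /= => ys zs.
by rewrite ys zs /= orbF Hc // seq_lab_cons.
Qed.

Lemma cat_order_swap b c1 c2 v s :
  cat_order (CNode b [:: c1; c2]) b v s -> cat_order (CNode b [:: c2; c1]) b v s.
Proof.
case=> us L s0 ls H; split=> // [z|y z ys zs yz].
  by rewrite -L /= !cats0 !mem_cat orbC.
rewrite -H //=; case: (y \in leaves c1); case: (z \in leaves c1);
case: (y \in leaves c2); case: (z \in leaves c2) => //=;
by case: (lca_label y z c1); case: (lca_label y z c2).
Qed.

Lemma cat_order_cat_cotree b x s :
  uniq (x :: s) -> cat_order (cat_cotree b (x :: s)) b (last x s) (x :: s).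
Proof.
elim: s x b => [|y s IH] x b; first by move=> _; apply: cat_order_leaf.
by case/andP=> xs us; apply: cat_order_cons => //; apply: IH.
Qed.

Lemma caterpillar_cherry_split v b ts :
  caterpillar (CNode b ts) -> in_cherry v (CNode b ts) ->
  exists x c, (ts = [:: CLeaf x; c] \/ ts = [:: c; CLeaf x]) /\
              (in_cherry v c || is_leaf_of v c).
Proof.
case: ts => [|c1 [|c2 [|? ?]]] // /and3P [_ cnt _]; rewrite [in_cherry _ _]/= orbF.
case: c1 c2 cnt => [x|b1 ts1] [y|b2 ts2] //= _.
- rewrite orbF; case/orP=> [xv|yv].
    by exists y, (CLeaf x); split; [right | rewrite /= xv].
  by exists x, (CLeaf y); split; [left | rewrite /= yv].
- by move=> ch; exists x, (CNode b2 ts2); split; [left | rewrite /= !orbF in ch *].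
- by move=> ch; exists y, (CNode b1 ts1); split; [right | rewrite /= !orbF in ch *].
Qed.

(* Quantifying over [b] lets the induction pass to the child on the spine,
   whose root label is the negation of that of [t]. *)
Lemma cat_order_of_caterpillar v t b :
  discriminating t -> caterpillar t -> uniq (leaves t) -> label_differs b t ->
  in_cherry v t || is_leaf_of v t -> exists s, cat_order t (~~ b) v s.
Proof.
have [n] := ubnP (size (leaves t)); elim: n t b => // n IH [y|b' ts] b lt_n.
  by move=> _ _ _ _ /eqP ->; exists [:: v]; apply: cat_order_leaf.
move=> disc_t cat_t uniq_t /= b'b; rewrite orbF => ch.
have -> : ~~ b = b' by move: b'b; case: (b); case: (b').
have [x [c [E hc]]] := caterpillar_cherry_split cat_t ch.
have all_c (P : pred (cotree T)) : all P ts -> P c by case: E => -> /and3P [].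
have Lt : perm_eq (leaves (CNode b' ts)) (x :: leaves c).
  by case: E => -> /=; rewrite ?cats0 // perm_catC.
have /andP [xc uniq_c] : uniq (x :: leaves c) by rewrite -(perm_uniq Lt).
case/and3P: disc_t => _ /all_c lab_c /all_c disc_c.
case/and3P: cat_t => _ _ /all_c cat_c.
have lt_c : size (leaves c) < n.
  by rewrite -ltnS -[(size _).+1]/(size (x :: _)) -(perm_size Lt).
have [s ord_c] := IH c b' lt_c disc_c cat_c uniq_c lab_c hc.
have ord_t : cat_order (CNode b' [:: CLeaf x; c]) b' v (x :: s).
  by case: (ord_c) => _ Lc _ _ _; apply: cat_order_cons ord_c; rewrite -Lc.
by exists (x :: s); case: E => ->; last apply: cat_order_swap.
Qed.

End CaterpillarCotree.

Section PolarCat.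
Variables (T : finType) (e : rel T).
Hypotheses (e_sym : symmetric e) (e_irr : irreflexive e).
Implicit Types (s ys zs : seq T) (x y v : T) (b : bool) (t : cotree T).

Lemma caterpillar_seq_adj v W t :
  discr_cotree_of e W t -> caterpillar t -> in_cherry v t ->
  exists b s, [/\ uniq s, W = [set x in s], last v s = v & {in s &, e =2 seq_adj b s}].
Proof.
case: t => [//|b ts] [disc_t [uniq_t mem_t e_lca]] cat_t ch.
have lab_t : label_differs (~~ b) (CNode b ts) by case: (b).
have ch_t : in_cherry v (CNode b ts) || is_leaf_of v (CNode b ts) by rewrite ch.
have [s] := cat_order_of_caterpillar disc_t cat_t uniq_t lab_t ch_t.
rewrite negbK => -[us Ls _ ls Hs].
exists b, s; split=> //; first by apply/setP => z; rewrite inE -Ls mem_t.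
move=> x y xs ys; have [<-|xy] := eqVneq x y; first by rewrite e_irr /seq_adj eqxx !andbF.
by rewrite e_lca -?mem_t ?Ls // Hs // /seq_adj xs ys xy.
Qed.

Lemma seq_adj_caterpillar b v s : uniq s -> 1 < size s -> last v s = v ->
  {in s &, e =2 seq_adj b s} ->
  exists t, [/\ discr_cotree_of e [set x in s] t, caterpillar t & in_cherry v t].
Proof.
case: s => [//|x [//|y r]] us _ ls He.
have [_ _ _ _ lca_t] := cat_order_cat_cotree b us.
exists (cat_cotree b [:: x, y & r]); split.
- split; first exact: discriminating_cat_cotree.
  split=> [|z|z w]; rewrite ?leaves_cat_cotree ?in_set //.
  by move=> zs ws zw; rewrite He // lca_t // /seq_adj zs ws zw.
- exact: caterpillar_cat_cotree.
- by rewrite -ls; apply: in_cherry_cat_cotree.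
Qed.

Definition polar_adj b v ys zs x y :=
  [|| seq_adj b ys x y, seq_adj b zs x y,
      ~~ b && (x \in [set z in ys] :\ v) && (y \in [set z in zs] :\ v) |
      ~~ b && (y \in [set z in ys] :\ v) && (x \in [set z in zs] :\ v)].

Section PolarAdjacency.
Variables (v : T) (ys zs : seq T).
Hypothesis ys_zs_v : [set x in ys] :&: [set x in zs] = [set v].

Lemma mem_zs_of_ys x : x \in ys -> (x \in zs) = (x == v).
Proof.
have: v \in [set x in ys] :&: [set x in zs] by rewrite ys_zs_v set11.
rewrite !inE => /andP [_ vZ] xY; apply/idP/eqP => [xZ|->] //.
by apply/set1P; rewrite -ys_zs_v !inE xY xZ.
Qed.

Lemma mem_ys_of_zs x : x \in zs -> (x \in ys) = (x == v).
Proof.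
have: v \in [set x in ys] :&: [set x in zs] by rewrite ys_zs_v set11.
rewrite !inE => /andP [vY _] xZ; apply/idP/eqP => [xY|->] //.
by apply/set1P; rewrite -ys_zs_v !inE xY xZ.
Qed.

Lemma polar_adj_ys b x y :
  x \in ys -> y \in ys -> polar_adj b v ys zs x y = seq_adj b ys x y.
Proof.
move=> xY yY; rewrite /polar_adj /seq_adj !inE xY yY !mem_zs_of_ys //.
by case: (x =P v) => [->|_]; case: (y =P v) => [->|_]; rewrite ?eqxx //= !andbF ?orbF.
Qed.

Lemma polar_adj_zs b x y :
  x \in zs -> y \in zs -> polar_adj b v ys zs x y = seq_adj b zs x y.
Proof.
move=> xZ yZ; rewrite /polar_adj /seq_adj !inE xZ yZ !mem_ys_of_zs //.
by case: (x =P v) => [->|_]; case: (y =P v) => [->|_]; rewrite ?eqxx //= !andbF ?orbF.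
Qed.

Lemma polar_adj_cross b x y : x \in [set z in ys] :\ v -> y \in [set z in zs] :\ v ->
  polar_adj b v ys zs x y = ~~ b.
Proof.
rewrite !inE => /andP [xv xY] /andP [yv yZ].
rewrite /polar_adj /seq_adj !inE xY yZ xv yv (mem_zs_of_ys xY) (mem_ys_of_zs yZ).
by rewrite (negbTE xv) (negbTE yv) !andbF; case: b.
Qed.

Lemma polar_adjC b x y : polar_adj b v ys zs x y = polar_adj b v ys zs y x.
Proof. by rewrite /polar_adj seq_adjC (seq_adjC b zs) [_ && _ || _]orbC. Qed.

Lemma polar_adjP b : [set x in ys] :|: [set x in zs] = setT ->
  e =2 polar_adj b v ys zs <->
  [/\ {in ys &, e =2 seq_adj b ys}, {in zs &, e =2 seq_adj b zs} &
      forall x y, x \in [set z in ys] :\ v -> y \in [set z in zs] :\ v -> e x y = ~~ b].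
Proof.
move=> ys_zs_T; split=> [He|[HY HZ HC] x y].
  split=> x y hx hy; rewrite He.
  - exact: polar_adj_ys.
  - exact: polar_adj_zs.
  - exact: polar_adj_cross.
have mem u : (u \in ys) || (u \in zs) by move: (in_setT u); rewrite -ys_zs_T !inE.
wlog xY : x y / x \in ys => [sym|].
  case/orP: (mem x) => [/sym//|xZ]; case/orP: (mem y) => [/sym|yZ].
    by rewrite e_sym polar_adjC.
  by rewrite HZ ?polar_adj_zs.
have [yY|yY] := boolP (y \in ys); first by rewrite HY ?polar_adj_ys.
have yZ : y \in zs by move: (mem y); rewrite (negbTE yY).
have [xv|xv] := eqVneq x v.
  have xZ : x \in zs by rewrite (mem_zs_of_ys xY) xv.
  by rewrite HZ ?polar_adj_zs.
have hx : x \in [set z in ys] :\ v by rewrite !inE xv xY.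
have hy : y \in [set z in zs] :\ v by rewrite !inE yZ andbT -(mem_ys_of_zs yZ).
by rewrite HC ?polar_adj_cross.
Qed.

End PolarAdjacency.

Lemma polar_adj_trueP v ys zs : uniq ys -> uniq zs -> forall x y,
  reflect (seq_edge true ys x y \/ seq_edge true zs x y) (polar_adj true v ys zs x y).
Proof.
move=> uY uZ x y; rewrite /polar_adj /= !orbF.
by apply: (iffP orP) => -[/(seq_edgeP _ _ _ uY) | /(seq_edgeP _ _ _ uZ)]; by [left | right].
Qed.

Lemma polar_adj_falseP v ys zs : uniq ys -> uniq zs -> forall x y,
  reflect [\/ seq_edge false ys x y, seq_edge false zs x y,
              x \in [set z in ys] :\ v /\ y \in [set z in zs] :\ v |
              y \in [set z in ys] :\ v /\ x \in [set z in zs] :\ v]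
          (polar_adj false v ys zs x y).
Proof.
move=> uY uZ x y; rewrite /polar_adj /=.
apply: (iffP or4P) => -[/(seq_edgeP _ _ _ uY) h | /(seq_edgeP _ _ _ uZ) h | /andP h | /andP h];
  by constructor.
Qed.

Lemma polar_cat_shapeP v ys zs : polar_cat_shape e v ys zs <->
  [/\ uniq ys /\ uniq zs, 2 <= size ys /\ 2 <= size zs, last v ys = v /\ last v zs = v,
      [set x in ys] :&: [set x in zs] = [set v] /\ [set x in ys] :|: [set x in zs] = setT &
      exists b, e =2 polar_adj b v ys zs].
Proof.
split=> -[[uY uZ] [sY sZ] lasts [I U] H]; split=> //.
  case: H => [[_ [_ Ha]]|[_ [_ Hb]]]; [exists true | exists false].
    exact: (rel_reflectE e (polar_adj_trueP v uY uZ)).1 Ha.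
  exact: (rel_reflectE e (polar_adj_falseP v uY uZ)).1 Hb.
case: H => b He; have [HY HZ _] := (polar_adjP I b U).1 He.
have cY := connected_seq_adj e_sym uY sY HY; have cZ := connected_seq_adj e_sym uZ sZ HZ.
case: b {HY HZ} He cY cZ => He cY cZ; [left | right]; rewrite cY cZ; do 2!split=> //.
  exact/(rel_reflectE e (polar_adj_trueP v uY uZ)).
exact/(rel_reflectE e (polar_adj_falseP v uY uZ)).
Qed.

Lemma polar_cat_at_of_shape v ys zs : 4 <= #|T| ->
  polar_cat_shape e v ys zs -> polar_cat_at e v [set x in ys] [set x in zs].
Proof.
move=> hX /polar_cat_shapeP [[uY uZ] [sY sZ] [lY lZ] [I U] [b He]].
have [HY HZ HC] := (polar_adjP I b U).1 He.
have pc : pseudo_cograph_with e (~~ b) v [set x in ys] [set x in zs].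
  split=> //; first by rewrite !cardsE (card_uniqP uY) (card_uniqP uZ).
  by split; [apply: (cograph_seq_adj e_sym HY) | apply: (cograph_seq_adj e_sym HZ)].
have [t1 [D1 C1 Ch1]] := seq_adj_caterpillar uY sY lY HY.
have [t2 [D2 C2 Ch2]] := seq_adj_caterpillar uZ sZ lZ HZ.
split; first by split=> //; case: b pc {He HY HZ HC} => pc; [right | left].
- by rewrite (connected_seq_adj e_sym uY sY HY) (connected_seq_adj e_sym uZ sZ HZ);
    case: b pc {He HY HZ HC} => pc; [left | right].
- by exists t1.
- by exists t2.
- by split; [exists t1 | exists t2].
Qed.

Lemma shape_of_polar_cat_at v V1 V2 :
  polar_cat_at e v V1 V2 -> exists ys zs, polar_cat_shape e v ys zs.
Proof.
move=> [[_ _] conn _ _ [[t1 [D1 C1 Ch1]] [t2 [D2 C2 Ch2]]]].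
have [b1 [ys [uY E1 lY HY]]] := caterpillar_seq_adj D1 C1 Ch1.
have [b2 [zs [uZ E2 lZ HZ]]] := caterpillar_seq_adj D2 C2 Ch2.
subst V1 V2.
have [j [[U I [sY sZ] _ HC] cY cZ]] : exists j,
    [/\ pseudo_cograph_with e j v [set x in ys] [set x in zs],
        connected e [set x in ys] <-> ~~ j & connected e [set x in zs] <-> ~~ j].
  by case: conn => -[c1 [c2 pc]]; [exists false | exists true].
rewrite !cardsE (card_uniqP uY) (card_uniqP uZ) in sY sZ.
have iff_eq (P : Prop) (b b' : bool) : (P <-> b) -> (P <-> b') -> b = b'.
  by move=> h h'; apply/idP/idP => [/h/h' | /h'/h].
have b1j := iff_eq _ _ _ (connected_seq_adj e_sym uY sY HY) cY.
have b2j := iff_eq _ _ _ (connected_seq_adj e_sym uZ sZ HZ) cZ.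
exists ys, zs; apply/polar_cat_shapeP; split=> //; exists (~~ j).
by apply/(polar_adjP I _ U); split; [rewrite -b1j | rewrite -b2j | rewrite negbK].
Qed.

End PolarCat.

Theorem mainTheorem15 (T : finType) (e : rel T)
    (e_sym : symmetric e) (e_irr : irreflexive e) (hX : 4 <= #|T|) :
  (polar_cat e <-> exists v ys zs, polar_cat_shape e v ys zs) /\
  (forall v ys zs, polar_cat_shape e v ys zs ->
     polar_cat_at e v [set x in ys] [set x in zs]).
Proof.
split; last by move=> v ys zs; apply: polar_cat_at_of_shape.
split=> [[v [V1 [V2 /(shape_of_polar_cat_at e_sym e_irr)]]] | [v [ys [zs shape]]]].
  by exists v.
by exists v, [set x in ys], [set x in zs]; apply: polar_cat_at_of_shape.
Qed.
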